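(* Let $T$, $\mathcal{S}=\mathcal{S}_+\cup\mathcal{S}_-$, $\Psi$, $U$, $\mu$, $P_\mu$ and $V_\mu$ be as in the context. Consider the following three discrete-time QBDs on phase space $\mathcal{S}$: (i) the QBD with blocks $\Theta_{-1}=\begin{bmatrix}0&\frac12P_{\mu+-}\\0&P_{\mu--}\end{bmatrix}$, $\Theta_0=\begin{bmatrix}\frac12P_{\mu++}&0\\P_{\mu-+}&0\end{bmatrix}$, $\Theta_1=\frac12\begin{bmatrix}I&0\\0&0\end{bmatrix}$; (ii) the QBD with blocks $B'_{-1}=\frac12\begin{bmatrix}0&P_{\mu+-}\\0&P_{\mu--}\end{bmatrix}$, $B'_0=\frac12\begin{bmatrix}P_{\mu++}&0\\P_{\mu-+}&I\end{bmatrix}$, $B'_1=\frac12\begin{bmatrix}I&0\\0&0\end{bmatrix}$; (iii) the QBD with blocks $B_{-1}=\begin{bmatrix}0&(I-\mu^{-1}T_{++})^{-1}P_{\mu+-}\\0&V_\mu\end{bmatrix}$, $B_0=0$, $B_1=\begin{bmatrix}(I-\mu^{-1}T_{++})^{-1}&0\\0&0\end{bmatrix}$. Then the QBD in (ii) has the same $\mathcal{G}$-matrix as the QBD in (i) and the same $\mathcal{G}$-matrix as the QBD in (iii).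
   Context: $T$ is the generator of a continuous-time Markov chain on a finite set $\mathcal{S}=\mathcal{S}_+\cup\mathcal{S}_-$ (disjoint, both nonempty), partitioned into blocks $T_{++},T_{+-},T_{-+},T_{--}$ according to $\mathcal{S}_\pm$. $\Psi$ is the minimal nonnegative solution of $T_{+-}+\Psi T_{--}+T_{++}\Psi+\Psi T_{-+}\Psi=0$ (the first-return probability matrix of the unit-rate fluid queue with phase generator $T$, rates $+1$ on $\mathcal{S}_+$ and $-1$ on $\mathcal{S}_-$), and $U:=T_{--}+T_{-+}\Psi$. $\mu>0$ satisfies $\mu\ge\max_i|T_{ii}|$; $P_\mu:=I+\mu^{-1}T$ with blocks $P_{\mu++}$ etc., and $V_\mu:=I+\mu^{-1}U$. A discrete-time quasi-birth-death process (QBD) with transition blocks $L_{-1},L_0,L_1$ is a Markov chain $\{(Y_n,\kappa_n)\}$ on $\mathbb{Z}\times\mathcal{S}$ with $\mathbb{P}[Y_n=k+d,\kappa_n=j\mid Y_{n-1}=k,\kappa_{n-1}=i]=(L_d)_{ij}$ for $d\in\{-1,0,1\}$. Its $\mathcal{G}$-matrix has entries $\mathcal{G}_{ij}=\mathbb{P}[\theta<\infty,\kappa_\theta=j\mid Y_0=k,\kappa_0=i]$ with $\theta=\inf\{n>0:Y_n=k-1\}$. Matrices are partitioned into blocks according to $\mathcal{S}_+,\mathcal{S}_-$. *)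

From HB Require Import structures.
From mathcomp Require Import all_boot all_order all_algebra.
From mathcomp Require Import all_classical all_reals all_analysis.
Set Implicit Arguments. Unset Strict Implicit. Unset Printing Implicit Defensive.
Import Order.TTheory GRing.Theory Num.Theory.
Local Open Scope ring_scope.

(* Phase space S = 'I_(p + m); S_+ = first p indices, S_- = last m indices.
   Blocks ++, +-, -+, -- are ulsubmx, ursubmx, dlsubmx, drsubmx. *)

Definition is_generator (R : realType) (n : nat) (T : 'M[R]_n) : Prop :=
  (forall i j, i != j -> 0 <= T i j) /\ (forall i, \sum_j T i j = 0).

Definition riccati (R : realType) (p m : nat) (T : 'M[R]_(p + m))
    (X : 'M[R]_(p, m)) : Prop :=
  ursubmx T + X *m drsubmx T + ulsubmx T *m X + X *m dlsubmx T *m X = 0.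

Definition nonneg_mx (R : realType) (a b : nat) (X : 'M[R]_(a, b)) : Prop :=
  forall i j, 0 <= X i j.

Definition is_min_nonneg_sol (R : realType) (p m : nat) (T : 'M[R]_(p + m))
    (Psi : 'M[R]_(p, m)) : Prop :=
  [/\ nonneg_mx Psi, riccati T Psi &
      forall X : 'M[R]_(p, m), nonneg_mx X -> riccati T X ->
        forall i j, Psi i j <= X i j].

(* Taboo transition matrices of a discrete-time QBD with blocks Lm = L_{-1},
   L0 = L_0, Lp = L_1: (taboo k l) i j is the probability, starting from
   (level y, phase i), to be at (level y + l, phase j) at time k without
   having visited level y - 1 at any of the times 1..k. *)
Fixpoint taboo (R : realType) (n : nat) (Lm L0 Lp : 'M[R]_n) (k : nat)
    : nat -> 'M[R]_n :=
  match k with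
  | 0 => fun l => if l == 0%N then 1%:M else 0
  | k'.+1 => fun l =>
      (if l is l'.+1 then taboo Lm L0 Lp k' l' *m Lp else 0)
      + taboo Lm L0 Lp k' l *m L0 + taboo Lm L0 Lp k' l.+1 *m Lm
  end.

(* The G-matrix: G i j = P[theta < oo, kappa_theta = j | Y_0 = y, kappa_0 = i],
   theta = first time n > 0 with Y_n = y - 1; i.e. the sum over k >= 0 of the
   probabilities that theta = k + 1 and kappa_theta = j. *)
Definition Gmatrix (R : realType) (n : nat) (Lm L0 Lp : 'M[R]_n) : 'M[R]_n :=
  \matrix_(i, j)
    limn (fun N : nat => \sum_(k < N) (taboo Lm L0 Lp k 0 *m Lm) i j).

Section Blocks.
Variables (R : realType) (p m : nat) (T : 'M[R]_(p + m)) (Psi : 'M[R]_(p, m))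
  (mu : R).

Definition Pmu : 'M[R]_(p + m) := 1%:M + mu^-1 *: T.
Definition Umx : 'M[R]_m := drsubmx T + dlsubmx T *m Psi.
Definition Vmu : 'M[R]_m := 1%:M + mu^-1 *: Umx.
Definition Minv : 'M[R]_p := invmx (1%:M - mu^-1 *: ulsubmx T).

Definition Theta_m1 : 'M[R]_(p + m) :=
  block_mx 0 (2^-1 *: ursubmx Pmu) 0 (drsubmx Pmu).
Definition Theta_0 : 'M[R]_(p + m) :=
  block_mx (2^-1 *: ulsubmx Pmu) 0 (dlsubmx Pmu) 0.
Definition Theta_1 : 'M[R]_(p + m) :=
  2^-1 *: block_mx 1%:M 0 0 0.

Definition Bp_m1 : 'M[R]_(p + m) :=
  2^-1 *: block_mx 0 (ursubmx Pmu) 0 (drsubmx Pmu).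
Definition Bp_0 : 'M[R]_(p + m) :=
  2^-1 *: block_mx (ulsubmx Pmu) 0 (dlsubmx Pmu) 1%:M.
Definition Bp_1 : 'M[R]_(p + m) :=
  2^-1 *: block_mx 1%:M 0 0 0.

Definition B_m1 : 'M[R]_(p + m) :=
  block_mx 0 (Minv *m ursubmx Pmu) 0 Vmu.
Definition B_0 : 'M[R]_(p + m) := 0.
Definition B_1 : 'M[R]_(p + m) :=
  block_mx Minv 0 0 0.
End Blocks.

(* The G-matrix of a QBD with nonnegative blocks L_{-1}, L_0, L_1 is the
   minimal nonnegative solution of X = L_{-1} + L_0 X + L_1 X^2 as soon as this
   equation has a nonnegative supersolution X: by first-step analysis, the
   probability of a first passage from level y + a down to y - 1 within N steps
   is bounded by X^(a+1), and since a passage down two levels is the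
   convolution of two passages down one level, the limit of these
   probabilities is itself a fixed point.

   For each of the three QBDs, G* = [[0, Psi], [0, V_mu]] is a fixed point (this
   is the Riccati equation for Psi written with P_mu), so the G-matrix lies
   below G* and has the form [[0, Y], [0, Z]] with Y <= Psi. For (i) and (ii)
   the fixed-point equation says that Y solves the Riccati equation, so Y = Psi
   by minimality, and then Z = V_mu. For (iii) it gives Z = V_mu and
   (I - mu^-1 T_{++}) Y = P_{mu+-} + Y V_mu, which makes [[0, Y], [0, V_mu]] a
   supersolution for (ii); hence G* <= [[0, Y], [0, V_mu]] and again Y = Psi. *)

From mathcomp Require Import all_boot all_order all_algebra.
From mathcomp Require Import all_classical all_reals all_analysis.
From mathcomp.algebra_tactics Require Import ring lra.
From mathcomp Require Import zify.
Import Order.TTheory GRing.Theory Num.Theory.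
Import numFieldNormedType.Exports.
Local Open Scope classical_set_scope.
Local Open Scope ring_scope.
Set Implicit Arguments. Unset Strict Implicit. Unset Printing Implicit Defensive.

Section EntrywiseOrder.
Variable R : realType.

Definition mx_le (a b : nat) (A B : 'M[R]_(a, b)) := forall i j, A i j <= B i j.

Lemma nonneg_mxE a b (A : 'M[R]_(a, b)) : nonneg_mx A <-> mx_le 0 A.
Proof. by split=> A_ge0 i j; have := A_ge0 i j; rewrite mxE. Qed.

Lemma nonneg_mx0 a b : nonneg_mx (0 : 'M[R]_(a, b)).
Proof. by move=> i j; rewrite mxE. Qed.

Lemma nonneg_mx1 a : nonneg_mx (1%:M : 'M[R]_a).
Proof. by move=> i j; rewrite mxE ler0n. Qed.

Lemma nonneg_mxD a b (A B : 'M[R]_(a, b)) :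
  nonneg_mx A -> nonneg_mx B -> nonneg_mx (A + B).
Proof. by move=> A_ge0 B_ge0 i j; rewrite mxE addr_ge0. Qed.

Lemma nonneg_mxM a b c (A : 'M[R]_(a, b)) (B : 'M[R]_(b, c)) :
  nonneg_mx A -> nonneg_mx B -> nonneg_mx (A *m B).
Proof.
by move=> A_ge0 B_ge0 i j; rewrite mxE sumr_ge0 // => l _; rewrite mulr_ge0.
Qed.

Lemma nonneg_mxZ a b (c : R) (A : 'M[R]_(a, b)) :
  0 <= c -> nonneg_mx A -> nonneg_mx (c *: A).
Proof. by move=> c_ge0 A_ge0 i j; rewrite mxE mulr_ge0. Qed.

Lemma nonneg_mx_sum a b (I : finType) (A : I -> 'M[R]_(a, b)) :
  (forall k, nonneg_mx (A k)) -> nonneg_mx (\sum_k A k).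
Proof. by move=> A_ge0 i j; rewrite summxE sumr_ge0 // => k _; apply: A_ge0. Qed.

Lemma nonneg_mxX a (A : 'M[R]_a) k : nonneg_mx A -> nonneg_mx (A ^+ k).
Proof.
move=> A_ge0; elim: k => [|k IHk]; first by rewrite expr0; apply: nonneg_mx1.
by rewrite exprS -mulmxE; apply: nonneg_mxM.
Qed.

Lemma nonneg_block_mx a1 a2 b1 b2 (A : 'M[R]_(a1, b1)) (B : 'M[R]_(a1, b2))
    (C : 'M[R]_(a2, b1)) (D : 'M[R]_(a2, b2)) :
  nonneg_mx A -> nonneg_mx B -> nonneg_mx C -> nonneg_mx D ->
  nonneg_mx (block_mx A B C D).
Proof.
move=> A_ge0 B_ge0 C_ge0 D_ge0 i j.
case: (split_ordP i) => {}i ->; case: (split_ordP j) => {}j ->;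
by rewrite ?block_mxEul ?block_mxEur ?block_mxEdl ?block_mxEdr.
Qed.

Section Submatrices.
Variables (a1 a2 b1 b2 : nat) (A : 'M[R]_(a1 + a2, b1 + b2)).
Hypothesis A_ge0 : nonneg_mx A.

Lemma nonneg_ulsubmx : nonneg_mx (ulsubmx A).
Proof. by move=> i j; rewrite !mxE; apply: A_ge0. Qed.
Lemma nonneg_ursubmx : nonneg_mx (ursubmx A).
Proof. by move=> i j; rewrite !mxE; apply: A_ge0. Qed.
Lemma nonneg_dlsubmx : nonneg_mx (dlsubmx A).
Proof. by move=> i j; rewrite !mxE; apply: A_ge0. Qed.
Lemma nonneg_drsubmx : nonneg_mx (drsubmx A).
Proof. by move=> i j; rewrite !mxE; apply: A_ge0. Qed.
End Submatrices.

Lemma mx_le_refl a b (A : 'M[R]_(a, b)) : mx_le A A.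
Proof. by []. Qed.

Lemma mx_le_trans a b (A B C : 'M[R]_(a, b)) : mx_le A B -> mx_le B C -> mx_le A C.
Proof. by move=> AB BC i j; apply: le_trans (AB i j) (BC i j). Qed.

Lemma mx_le_anti a b (A B : 'M[R]_(a, b)) : mx_le A B -> mx_le B A -> A = B.
Proof. by move=> AB BA; apply/matrixP => i j; apply/le_anti; rewrite AB BA. Qed.

Lemma mx_leD a b (A B C D : 'M[R]_(a, b)) :
  mx_le A B -> mx_le C D -> mx_le (A + C) (B + D).
Proof. by move=> AB CD i j; rewrite !mxE lerD. Qed.

Lemma mx_leMl a b c (A : 'M[R]_(a, b)) (B C : 'M[R]_(b, c)) :
  nonneg_mx A -> mx_le B C -> mx_le (A *m B) (A *m C).
Proof. by move=> A_ge0 BC i j; rewrite !mxE ler_sum // => l _; rewrite ler_wpM2l. Qed.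

Lemma mx_leMr a b c (A : 'M[R]_(b, c)) (B C : 'M[R]_(a, b)) :
  nonneg_mx A -> mx_le B C -> mx_le (B *m A) (C *m A).
Proof. by move=> A_ge0 BC i j; rewrite !mxE ler_sum // => l _; rewrite ler_wpM2r. Qed.

Lemma mx_leM a b c (A B : 'M[R]_(a, b)) (C D : 'M[R]_(b, c)) :
  nonneg_mx A -> nonneg_mx D -> mx_le A B -> mx_le C D -> mx_le (A *m C) (B *m D).
Proof.
move=> A_ge0 D_ge0 AB CD.
exact: mx_le_trans (mx_leMl A_ge0 CD) (mx_leMr D_ge0 AB).
Qed.

Lemma mx_le_sum a b k (A B : 'I_k -> 'M[R]_(a, b)) :
  (forall i, mx_le (A i) (B i)) -> mx_le (\sum_(i < k) A i) (\sum_(i < k) B i).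
Proof. by move=> AB i j; rewrite !summxE ler_sum // => l _; apply: AB. Qed.

Lemma mx_le_sum_widen a b N M (A : nat -> 'M[R]_(a, b)) :
  (N <= M)%N -> (forall k, nonneg_mx (A k)) ->
  mx_le (\sum_(k < N) A k) (\sum_(k < M) A k).
Proof.
move=> NM A_ge0 i j; rewrite !summxE (big_ord_widen M (fun k => A k i j) NM) big_mkcond.
by apply: ler_sum => k _; case: ifP => _ //; apply: A_ge0.
Qed.

Lemma mx_le_block a1 a2 b1 b2 (A A' : 'M[R]_(a1, b1)) (B B' : 'M[R]_(a1, b2))
    (C C' : 'M[R]_(a2, b1)) (D D' : 'M[R]_(a2, b2)) :
  mx_le A A' -> mx_le B B' -> mx_le C C' -> mx_le D D' ->
  mx_le (block_mx A B C D) (block_mx A' B' C' D').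
Proof.
move=> AA' BB' CC' DD' i j.
case: (split_ordP i) => {}i ->; case: (split_ordP j) => {}j ->;
by rewrite ?block_mxEul ?block_mxEur ?block_mxEdl ?block_mxEdr.
Qed.

Lemma mx_le_ursubmx a1 a2 b1 b2 (A B : 'M[R]_(a1 + a2, b1 + b2)) :
  mx_le A B -> mx_le (ursubmx A) (ursubmx B).
Proof. by move=> AB i j; rewrite !mxE. Qed.

Lemma le_left0_block_mx a1 a2 b1 b2 (G : 'M[R]_(a1 + a2, b1 + b2)) B D :
  nonneg_mx G -> mx_le G (block_mx 0 B 0 D) ->
  G = block_mx 0 (ursubmx G) 0 (drsubmx G).
Proof.
move=> G_ge0 G_le; rewrite -{1}[G]submxK; congr block_mx;
  apply/matrixP => i j; apply/le_anti; rewrite !mxE G_ge0 andbT.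
  by have := G_le (lshift a2 i) (lshift b2 j); rewrite block_mxEul mxE.
by have := G_le (rshift a1 i) (lshift b2 j); rewrite block_mxEdl mxE.
Qed.

End EntrywiseOrder.

Section MMatrix.
Variables (R : realType) (k : nat) (K : 'M[R]_k).
Hypotheses (K_offdiag_le0 : forall i j, i != j -> K i j <= 0)
           (K_rowsum_gt0 : forall i, 0 < \sum_j K i j).

(* Discrete minimum principle: a row where a column of X is minimal and
   negative would make the corresponding entry of K X negative. *)
Lemma Mmatrix_monotone c (X : 'M[R]_(k, c)) : nonneg_mx (K *m X) -> nonneg_mx X.
Proof.
move=> KX_ge0 i j.
case: (@arg_minP _ _ _ i xpredT (fun i' => X i' j)) => // i0 _ X_min.
apply: le_trans (X_min i isT); rewrite leNgt; apply/negP => Xi0_lt0.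
have KX_le : (K *m X) i0 j <= (\sum_l K i0 l) * X i0 j.
  rewrite mxE mulr_suml; apply: ler_sum => l _.
  have [->//|ne] := eqVneq l i0.
  by apply: ler_wnM2l; [apply: K_offdiag_le0; rewrite eq_sym|apply: X_min].
have := KX_ge0 i0 j; have : (\sum_l K i0 l) * X i0 j < 0 by rewrite pmulr_rlt0.
lra.
Qed.

Lemma Mmatrix_unit : K \in unitmx.
Proof.
rewrite unitmxE unitfE -det_tr; apply/negP => /det0P [v v_neq0 vK0].
have Kv0 : K *m v^T = 0 by rewrite -[K]trmxK -trmx_mul vK0 trmx0.
have v_ge0 : nonneg_mx v^T by apply: Mmatrix_monotone; rewrite Kv0; apply: nonneg_mx0.
have v_le0 : nonneg_mx (- v^T).
  by apply: Mmatrix_monotone; rewrite mulmxN Kv0 oppr0; apply: nonneg_mx0.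
move/negP: v_neq0; apply; apply/eqP/matrixP => i j.
by have := v_ge0 j i; have := v_le0 j i; rewrite !mxE; lra.
Qed.

Lemma nonneg_Mmatrix_inv : nonneg_mx (invmx K).
Proof.
by apply: Mmatrix_monotone; rewrite mulmxV ?Mmatrix_unit //; apply: nonneg_mx1.
Qed.

End MMatrix.

Ltac mx_ring := rewrite ?(mulmxDl, mulmxDr, mulmxBl, mulmxBr, mulNmx, mulmxN,
  mul1mx, mulmx1, mul0mx, mulmx0, mulmxA, scalerDr, scalerBr, scaler0, addr0,
  add0r, =^~ scalemxAl, =^~ scalemxAr);
  apply/matrixP => i j; rewrite ?mxE; ring.

Lemma sum_triangle (V : nmodType) M (f : nat -> nat -> V) :
  \sum_(k < M) \sum_(i < k) f i (k - i.+1)%N =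
  \sum_(i < M) \sum_(j < M - i.+1) f i j.
Proof.
elim: M => [|M IHM]; first by rewrite !big_ord0.
rewrite big_ord_recr /= IHM [RHS]big_ord_recr /= subnn big_ord0 addr0 -big_split.
by apply: eq_bigr => i _; rewrite subSS -(subnSK (ltn_ord i)) big_ord_recr.
Qed.

Section FirstPassage.
Variables (R : realType) (n : nat) (Lm L0 Lp : 'M[R]_n).

Fixpoint taboo_from (a k : nat) : nat -> 'M[R]_n :=
  match k with
  | 0 => fun l => if l == a then 1%:M else 0
  | k'.+1 => fun l =>
      (if l is l'.+1 then taboo_from a k' l' *m Lp else 0)
      + taboo_from a k' l *m L0 + taboo_from a k' l.+1 *m Lm
  end.

Lemma taboo_from0 k l : taboo_from 0 k l = taboo Lm L0 Lp k l.
Proof. by elim: k l => [|k IHk] [|l] //=; rewrite !IHk. Qed.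

Lemma taboo_fromS0 a k :
  taboo_from a k.+1 0 = taboo_from a k 0 *m L0 + taboo_from a k 1 *m Lm.
Proof. by rewrite /= add0r. Qed.

Lemma taboo_fromSS a k l : taboo_from a k.+1 l.+1 =
  taboo_from a k l *m Lp + taboo_from a k l.+1 *m L0 + taboo_from a k l.+2 *m Lm.
Proof. by []. Qed.

Lemma taboo_from_first_step a k l : taboo_from a k.+1 l =
  (if a is a'.+1 then Lm *m taboo_from a' k l else 0)
  + L0 *m taboo_from a k l + Lp *m taboo_from a.+1 k l.
Proof.
elim: k a l => [|k IHk] a l.
  case: a l => [|a] [|l] /=; rewrite ?eqSS;
  by do ?case: (_ == _); mx_ring.
case: l => [|l]; rewrite ?[LHS]taboo_fromS0 ?[LHS]taboo_fromSS ![in LHS]IHk;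
  by rewrite ?taboo_fromS0 ?taboo_fromSS; case: a => [|a]; mx_ring.
Qed.

(* [passage a k] is the probability matrix of reaching level [y - 1] for the
   first time at time [k + 1], starting from level [y + a]. *)
Definition passage a k := taboo_from a k 0 *m Lm.

Lemma passage0 a : passage a 0 = if a is 0 then Lm else 0.
Proof. by case: a => [|a]; rewrite /passage /= ?mul1mx ?mul0mx. Qed.

Lemma passage_first_step a k : passage a k.+1 =
  (if a is a'.+1 then Lm *m passage a' k else 0)
  + L0 *m passage a k + Lp *m passage a.+1 k.
Proof. by rewrite /passage taboo_from_first_step; case: a => [|a]; mx_ring. Qed.

(* Going down [a + 2] levels is going down [a + 1] levels and then one more. *)
Lemma passage_convolution a k :
  passage a.+1 k = \sum_(i < k) passage a i *m passage 0 (k - i.+1).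
Proof.
elim: k a => [|k IHk] a; first by rewrite big_ord0 passage0.
have sum_mulmxA (A : 'M[R]_n) (X : nat -> 'M[R]_n) :
    \sum_(i < k) A *m X i *m passage 0 (k - i.+1) =
    A *m \sum_(i < k) X i *m passage 0 (k - i.+1).
  by rewrite mulmx_sumr; apply: eq_bigr => i _; rewrite mulmxA.
rewrite big_ord_recl subn1 /=.
under eq_bigr => i _ do rewrite /bump add1n subSS passage_first_step !mulmxDl.
rewrite !big_split /= passage_first_step !sum_mulmxA -!IHk.
case: a => [|a]; rewrite passage0 ?sum_mulmxA -?IHk; last by mx_ring.
by rewrite big1 => [|i _]; [mx_ring | rewrite mul0mx].
Qed.

Definition passage_sum a N := \sum_(k < N) passage a k.

Lemma passage_sum_first_step a N : passage_sum a N.+1 =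
  (if a is a'.+1 then Lm *m passage_sum a' N else Lm)
  + L0 *m passage_sum a N + Lp *m passage_sum a.+1 N.
Proof.
rewrite /passage_sum big_ord_recl passage0.
under eq_bigr => i _ do rewrite /bump /= passage_first_step.
rewrite !big_split /= -!mulmx_sumr.
case: a => [|a]; last by rewrite -mulmx_sumr; mx_ring.
by rewrite big1_eq; mx_ring.
Qed.

Definition Gmap X := Lm + L0 *m X + Lp *m (X *m X).

Hypotheses (Lm_ge0 : nonneg_mx Lm) (L0_ge0 : nonneg_mx L0) (Lp_ge0 : nonneg_mx Lp).

Lemma nonneg_taboo_from a k l : nonneg_mx (taboo_from a k l).
Proof.
elim: k l => [|k IHk] l /=.
  by case: eqP => _; [apply: nonneg_mx1 | apply: nonneg_mx0].
apply: nonneg_mxD; [apply: nonneg_mxD|]; try exact: nonneg_mxM.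
by case: l => [|l]; [apply: nonneg_mx0 | apply: nonneg_mxM].
Qed.

Lemma nonneg_passage a k : nonneg_mx (passage a k).
Proof. exact: nonneg_mxM (nonneg_taboo_from _ _ _) Lm_ge0. Qed.

Lemma passage_sum_mono a N M : (N <= M)%N -> mx_le (passage_sum a N) (passage_sum a M).
Proof. by move=> NM; apply: mx_le_sum_widen => // k; apply: nonneg_passage. Qed.

Lemma nonneg_Gmap X : nonneg_mx X -> nonneg_mx (Gmap X).
Proof.
move=> X_ge0.
by apply: nonneg_mxD; [apply: nonneg_mxD; [|apply: nonneg_mxM] | do 2?apply: nonneg_mxM].
Qed.

Lemma Gmap_mono X Y : nonneg_mx X -> nonneg_mx Y -> mx_le X Y -> mx_le (Gmap X) (Gmap Y).
Proof.
move=> X_ge0 Y_ge0 XY.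
apply: mx_leD; [apply: mx_leD; [exact: mx_le_refl|]|]; apply: mx_leMl => //.
exact: mx_leM.
Qed.

Lemma passage_sum_le_pow X : nonneg_mx X -> mx_le (Gmap X) X ->
  forall a N, mx_le (passage_sum a N) (X ^+ a.+1).
Proof.
move=> X_ge0 GX_le a N; elim: N a => [|N IHN] a.
  by rewrite /passage_sum big_ord0; apply/nonneg_mxE/nonneg_mxX.
rewrite passage_sum_first_step; case: a => [|a].
  by apply: mx_le_trans GX_le; apply: mx_leD; [apply: mx_leD; [exact: mx_le_refl|]|];
    apply: mx_leMl => //; apply: IHN.
apply: (@mx_le_trans _ _ _ _ (Gmap X *m X ^+ a.+1)); last first.
  by rewrite [X ^+ a.+2]exprS -mulmxE; apply: mx_leMr => //; apply: nonneg_mxX.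
have -> : Gmap X *m X ^+ a.+1 = Lm *m X ^+ a.+1 + L0 *m X ^+ a.+2 + Lp *m X ^+ a.+3.
  by rewrite /Gmap !mulmxDl -!mulmxA !mulmxE -!exprS.
by apply: mx_leD; [apply: mx_leD|]; apply: mx_leMl => //; apply: IHN.
Qed.

Lemma passage_sum_sqr_le N :
  mx_le (passage_sum 0 N *m passage_sum 0 N) (passage_sum 1 (N + N)).
Proof.
pose f i j := passage 0 i *m passage 0 j.
have f_ge0 i j : nonneg_mx (f i j) by apply: nonneg_mxM; apply: nonneg_passage.
have -> : passage_sum 0 N *m passage_sum 0 N = \sum_(i < N) \sum_(j < N) f i j.
  by rewrite mulmx_suml; apply: eq_bigr => i _; rewrite mulmx_sumr.
have -> : passage_sum 1 (N + N) = \sum_(i < N + N) \sum_(j < N + N - i.+1) f i j.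
  by rewrite -sum_triangle; apply: eq_bigr => k _; rewrite passage_convolution.
apply: (@mx_le_trans _ _ _ _ (\sum_(i < N) \sum_(j < N + N - i.+1) f i j)).
  apply: mx_le_sum => i; apply: mx_le_sum_widen => //.
  by have := ltn_ord i; lia.
apply: (mx_le_sum_widen (A := fun i => \sum_(j < N + N - i.+1) f i j)) => [|i].
  by lia.
exact: nonneg_mx_sum.
Qed.

Lemma Gmap_passage_sum_le N :
  mx_le (Gmap (passage_sum 0 N)) (passage_sum 0 (N + N).+1).
Proof.
rewrite passage_sum_first_step.
apply: mx_leD; [apply: mx_leD; [exact: mx_le_refl|]|]; apply: mx_leMl => //.
  by apply: passage_sum_mono; lia.
exact: passage_sum_sqr_le.
Qed.

End FirstPassage.

Section EntrywiseLimits.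
Variable R : realType.

Definition mx_cvgn a b (u : nat -> 'M[R]_(a, b)) (A : 'M[R]_(a, b)) :=
  forall i j, (fun N => u N i j) @ \oo --> A i j.

Lemma mx_cvgn_cst a b (A : 'M[R]_(a, b)) : mx_cvgn (fun=> A) A.
Proof. by move=> i j; apply: cvg_cst. Qed.

Lemma mx_cvgnD a b (u v : nat -> 'M[R]_(a, b)) A B :
  mx_cvgn u A -> mx_cvgn v B -> mx_cvgn (fun N => u N + v N) (A + B).
Proof.
move=> uA vB i j; rewrite mxE.
by under eq_fun => N do rewrite mxE; apply: cvgD.
Qed.

Lemma mx_cvgnM a b c (u : nat -> 'M[R]_(a, b)) (v : nat -> 'M[R]_(b, c)) A B :
  mx_cvgn u A -> mx_cvgn v B -> mx_cvgn (fun N => u N *m v N) (A *m B).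
Proof.
move=> uA vB i j; rewrite mxE.
under eq_fun => N do rewrite mxE.
by apply: cvg_big => [|l _]; [exact: add_continuous | apply: cvgM].
Qed.

End EntrywiseLimits.

Section Gmatrix.
Variables (R : realType) (n : nat) (Lm L0 Lp : 'M[R]_n).
Hypotheses (Lm_ge0 : nonneg_mx Lm) (L0_ge0 : nonneg_mx L0) (Lp_ge0 : nonneg_mx Lp).
Variable X0 : 'M[R]_n.
Hypotheses (X0_ge0 : nonneg_mx X0) (Gmap_X0_le : mx_le (Gmap Lm L0 Lp X0) X0).

Local Notation G := (Gmatrix Lm L0 Lp).
Local Notation S := (passage_sum Lm L0 Lp 0).
Local Notation Gmap := (Gmap Lm L0 Lp).

Lemma passage_sum_nondecreasing i j : nondecreasing_seq (fun N => S N i j).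
Proof.
by apply/nondecreasing_seqP => N; apply: passage_sum_mono => //; apply: leqnSn.
Qed.

Lemma GmatrixE i j : G i j = limn (fun N => S N i j).
Proof.
rewrite mxE; congr (limn _); apply: funext => N.
by rewrite summxE; apply: eq_bigr => k _; rewrite -taboo_from0.
Qed.

Lemma passage_sum_is_cvgn i j : cvgn (fun N => S N i j).
Proof.
apply: nondecreasing_is_cvgn; first exact: passage_sum_nondecreasing.
exists (X0 i j) => _ [N _ <-].
exact: (passage_sum_le_pow Lm_ge0 L0_ge0 Lp_ge0 X0_ge0 Gmap_X0_le 0 N i j).
Qed.

Lemma passage_sum_cvgn : mx_cvgn S G.
Proof. by move=> i j; rewrite GmatrixE; apply: passage_sum_is_cvgn. Qed.

Lemma passage_sum_le_Gmatrix N : mx_le (S N) G.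
Proof.
move=> i j; rewrite GmatrixE.
apply: nondecreasing_cvgn_le; first exact: passage_sum_nondecreasing.
exact: passage_sum_is_cvgn.
Qed.

Lemma nonneg_Gmatrix : nonneg_mx G.
Proof.
apply/nonneg_mxE; apply: mx_le_trans (passage_sum_le_Gmatrix 0).
by rewrite /passage_sum big_ord0; apply: mx_le_refl.
Qed.

Lemma Gmatrix_min X : nonneg_mx X -> mx_le (Gmap X) X -> mx_le G X.
Proof.
move=> X_ge0 Gmap_X_le i j; rewrite GmatrixE.
apply: limr_le; first exact: passage_sum_is_cvgn.
apply: nearW => N.
exact: (passage_sum_le_pow Lm_ge0 L0_ge0 Lp_ge0 X_ge0 Gmap_X_le 0 N i j).
Qed.

Lemma Gmap_Gmatrix_le : mx_le (Gmap G) G.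
Proof.
have Gmap_cvgn : mx_cvgn (fun N => Gmap (S N)) (Gmap G).
  apply: mx_cvgnD; [apply: mx_cvgnD|]; do ?apply: mx_cvgnM;
  by [apply: mx_cvgn_cst | apply: passage_sum_cvgn].
move=> i j; rewrite -(cvg_lim _ (Gmap_cvgn i j)) //.
apply: limr_le; first exact: cvgP (Gmap_cvgn i j).
apply: nearW => N; apply: le_trans (Gmap_passage_sum_le Lm_ge0 L0_ge0 Lp_ge0 N i j) _.
exact: passage_sum_le_Gmatrix.
Qed.

Lemma Gmap_Gmatrix : Gmap G = G.
Proof.
apply: mx_le_anti; first exact: Gmap_Gmatrix_le.
have Gmap_G_ge0 : nonneg_mx (Gmap G) by apply/nonneg_Gmap/nonneg_Gmatrix.
apply: Gmatrix_min => //; apply: Gmap_mono => //; last exact: Gmap_Gmatrix_le.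
exact: nonneg_Gmatrix.
Qed.

End Gmatrix.

Section Theorem4.
Variables (R : realType) (p m : nat) (T : 'M[R]_(p + m)) (Psi : 'M[R]_(p, m)) (mu : R).
Hypotheses (T_gen : is_generator T) (Psi_min : is_min_nonneg_sol T Psi)
  (mu_gt0 : 0 < mu) (T_diag_le : forall i, `|T i i| <= mu).

Local Notation P := (Pmu T mu).
Local Notation V := (Vmu T Psi mu).
Local Notation K := (1%:M - mu^-1 *: ulsubmx T).

Lemma Pmu_block : P = block_mx (1%:M + mu^-1 *: ulsubmx T) (mu^-1 *: ursubmx T)
  (mu^-1 *: dlsubmx T) (1%:M + mu^-1 *: drsubmx T).
Proof.
by rewrite /Pmu -{1}[T]submxK (scalar_mx_block p m) scale_block_mx add_block_mx !add0r.
Qed.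

Lemma ulsubmx_Pmu : ulsubmx P = 1%:M + mu^-1 *: ulsubmx T.
Proof. by rewrite Pmu_block block_mxKul. Qed.
Lemma ursubmx_Pmu : ursubmx P = mu^-1 *: ursubmx T.
Proof. by rewrite Pmu_block block_mxKur. Qed.
Lemma dlsubmx_Pmu : dlsubmx P = mu^-1 *: dlsubmx T.
Proof. by rewrite Pmu_block block_mxKdl. Qed.
Lemma drsubmx_Pmu : drsubmx P = 1%:M + mu^-1 *: drsubmx T.
Proof. by rewrite Pmu_block block_mxKdr. Qed.

Lemma invmu_gt0 : 0 < mu^-1. Proof. by rewrite invr_gt0. Qed.

Lemma T_offdiag_ge0 i j : i != j -> 0 <= T i j.
Proof. by case: T_gen => offdiag_ge0 _; apply: offdiag_ge0. Qed.

Lemma nonneg_Pmu : nonneg_mx P.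
Proof.
move=> i j; rewrite /Pmu !mxE; have [<-|ne] := eqVneq i j; last first.
  by rewrite add0r mulr_ge0 ?T_offdiag_ge0 //; exact/ltW/invmu_gt0.
have : - mu <= T i i by move: (T_diag_le i); rewrite ler_norml => /andP[].
rewrite -(ler_pM2l invmu_gt0) mulrN mulVf ?gt_eqF //=; lra.
Qed.

Lemma nonneg_Psi : nonneg_mx Psi. Proof. by case: Psi_min. Qed.

Lemma Vmu_Pmu : V = drsubmx P + dlsubmx P *m Psi.
Proof. by rewrite /Vmu /Umx drsubmx_Pmu dlsubmx_Pmu; mx_ring. Qed.

Lemma nonneg_Vmu : nonneg_mx V.
Proof.
rewrite Vmu_Pmu; apply: nonneg_mxD; first exact: nonneg_drsubmx nonneg_Pmu.
exact: nonneg_mxM (nonneg_dlsubmx nonneg_Pmu) nonneg_Psi.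
Qed.

Lemma riccati_Pmu Y : riccati T Y <->
  ursubmx P + ulsubmx P *m Y + Y *m (drsubmx P + dlsubmx P *m Y) = Y + Y.
Proof.
have -> : ursubmx P + ulsubmx P *m Y + Y *m (drsubmx P + dlsubmx P *m Y) =
    Y + Y + mu^-1 *: (ursubmx T + Y *m drsubmx T + ulsubmx T *m Y + Y *m dlsubmx T *m Y).
  by rewrite ursubmx_Pmu ulsubmx_Pmu drsubmx_Pmu dlsubmx_Pmu; mx_ring.
rewrite /riccati; split=> [-> | ]; first by rewrite scaler0 addr0.
rewrite -{2}[Y + Y]addr0 => /addrI /eqP.
by rewrite scaler_eq0 invr_eq0 gt_eqF //= => /eqP.
Qed.

Lemma riccati_Psi : ursubmx P + ulsubmx P *m Psi + Psi *m V = Psi + Psi.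
Proof. by rewrite Vmu_Pmu; apply/riccati_Pmu; case: Psi_min. Qed.

Lemma K_Psi : K *m Psi = ursubmx P + Psi *m V.
Proof.
apply/(addrI (ulsubmx P *m Psi)).
by rewrite addrA [_ + ursubmx P]addrC riccati_Psi ulsubmx_Pmu; mx_ring.
Qed.

Lemma K_offdiag_le0 i j : i != j -> K i j <= 0.
Proof.
move=> ne; rewrite !mxE (negbTE ne) sub0r oppr_le0 mulr_ge0 //; first exact/ltW/invmu_gt0.
by apply: T_offdiag_ge0; rewrite (inj_eq (@lshift_inj p m)).
Qed.

Lemma rowsum_ulsubmx_le0 i : \sum_j T (lshift m i) (lshift m j) <= 0.
Proof.
case: T_gen => _ /(_ (lshift m i)); rewrite big_split_ord /= => rowsum0.
have : 0 <= \sum_(j < m) T (lshift m i) (rshift p j).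
  by apply: sumr_ge0 => j _; apply: T_offdiag_ge0; rewrite eq_lrshift.
lra.
Qed.

Lemma K_rowsum_gt0 i : 0 < \sum_j K i j.
Proof.
under eq_bigr do rewrite !mxE.
rewrite sumrB -mulr_sumr (bigD1 i) //= eqxx big1 => [|j /negbTE]; last first.
  by rewrite eq_sym => ->.
have := rowsum_ulsubmx_le0 i.
rewrite -(pmulr_rle0 _ invmu_gt0) addr0 /=; lra.
Qed.

Lemma K_unit : K \in unitmx.
Proof. exact: Mmatrix_unit K_offdiag_le0 K_rowsum_gt0. Qed.

Lemma nonneg_Minv : nonneg_mx (Minv T mu).
Proof. exact: nonneg_Mmatrix_inv K_offdiag_le0 K_rowsum_gt0. Qed.

Definition Gstar : 'M[R]_(p + m) := block_mx 0 Psi 0 V.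

Lemma nonneg_Gstar : nonneg_mx Gstar.
Proof.
by apply: nonneg_block_mx;
  [exact: nonneg_mx0 | exact: nonneg_Psi | exact: nonneg_mx0 | exact: nonneg_Vmu].
Qed.

Lemma half_scale_eq a b (A Y : 'M[R]_(a, b)) : 2^-1 *: A = Y <-> A = Y + Y.
Proof.
by split=> [<- | ->]; apply/matrixP => i j; rewrite !mxE; lra.
Qed.

Lemma Gmap_Theta_block Y Z :
  Gmap (Theta_m1 T mu) (Theta_0 T mu) (Theta_1 R p m) (block_mx 0 Y 0 Z) =
  block_mx 0 (2^-1 *: (ursubmx P + ulsubmx P *m Y + Y *m Z)) 0
    (drsubmx P + dlsubmx P *m Y).
Proof.
rewrite /Gmap /Theta_m1 /Theta_0 /Theta_1 -?scalemxAl !mulmx_block ?scale_block_mx.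
by rewrite !add_block_mx; congr block_mx; mx_ring.
Qed.

Lemma Gmap_Bp_block Y Z :
  Gmap (Bp_m1 T mu) (Bp_0 T mu) (Bp_1 R p m) (block_mx 0 Y 0 Z) =
  block_mx 0 (2^-1 *: (ursubmx P + ulsubmx P *m Y + Y *m Z)) 0
    (2^-1 *: (drsubmx P + dlsubmx P *m Y + Z)).
Proof.
rewrite /Gmap /Bp_m1 /Bp_0 /Bp_1 -?scalemxAl !mulmx_block ?scale_block_mx.
by rewrite !add_block_mx; congr block_mx; mx_ring.
Qed.

Lemma Gmap_B_block Y Z :
  Gmap (B_m1 T Psi mu) (B_0 R p m) (B_1 T mu) (block_mx 0 Y 0 Z) =
  block_mx 0 (Minv T mu *m (ursubmx P + Y *m Z)) 0 V.
Proof.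
rewrite /Gmap /B_m1 /B_0 /B_1 mul0mx addr0 !mulmx_block.
by rewrite !add_block_mx; congr block_mx; mx_ring.
Qed.

Lemma Gmap_Theta_Gstar :
  Gmap (Theta_m1 T mu) (Theta_0 T mu) (Theta_1 R p m) Gstar = Gstar.
Proof.
by rewrite Gmap_Theta_block riccati_Psi -Vmu_Pmu; congr block_mx; apply/half_scale_eq.
Qed.

Lemma Gmap_Bp_Gstar : Gmap (Bp_m1 T mu) (Bp_0 T mu) (Bp_1 R p m) Gstar = Gstar.
Proof.
by rewrite Gmap_Bp_block riccati_Psi -Vmu_Pmu; congr block_mx; apply/half_scale_eq.
Qed.

Lemma Gmap_B_Gstar : Gmap (B_m1 T Psi mu) (B_0 R p m) (B_1 T mu) Gstar = Gstar.
Proof. by rewrite Gmap_B_block -K_Psi mulmxA mulVmx ?mul1mx ?K_unit. Qed.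

Lemma half_ge0 : 0 <= (2 : R)^-1. Proof. by rewrite invr_ge0 ler0n. Qed.

Lemma nonneg_Theta :
  [/\ nonneg_mx (Theta_m1 T mu), nonneg_mx (Theta_0 T mu) & nonneg_mx (Theta_1 R p m)].
Proof.
have P_ge0 := nonneg_Pmu.
split; last apply: nonneg_mxZ half_ge0 _; apply: nonneg_block_mx;
  do ?apply: nonneg_mxZ half_ge0 _;
  by [apply: nonneg_mx0 | apply: nonneg_mx1 | apply: nonneg_ulsubmx
     | apply: nonneg_ursubmx | apply: nonneg_dlsubmx | apply: nonneg_drsubmx].
Qed.

Lemma nonneg_Bp :
  [/\ nonneg_mx (Bp_m1 T mu), nonneg_mx (Bp_0 T mu) & nonneg_mx (Bp_1 R p m)].
Proof.
have P_ge0 := nonneg_Pmu.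
split; apply: nonneg_mxZ half_ge0 _; apply: nonneg_block_mx;
  by [apply: nonneg_mx0 | apply: nonneg_mx1 | apply: nonneg_ulsubmx
     | apply: nonneg_ursubmx | apply: nonneg_dlsubmx | apply: nonneg_drsubmx].
Qed.

Lemma nonneg_B :
  [/\ nonneg_mx (B_m1 T Psi mu), nonneg_mx (B_0 R p m) & nonneg_mx (B_1 T mu)].
Proof.
split; [apply: nonneg_block_mx | exact: nonneg_mx0 | apply: nonneg_block_mx];
  by [apply: nonneg_mx0 | apply: nonneg_Vmu | apply: nonneg_Minv
     | apply: nonneg_mxM (nonneg_Minv) (nonneg_ursubmx nonneg_Pmu)].
Qed.

Lemma Gmatrix_fixed_block (Lm L0 Lp : 'M[R]_(p + m)) :
  nonneg_mx Lm -> nonneg_mx L0 -> nonneg_mx Lp -> Gmap Lm L0 Lp Gstar = Gstar ->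
  exists Y Z, [/\ Gmatrix Lm L0 Lp = block_mx 0 Y 0 Z, nonneg_mx Y, mx_le Y Psi
    & Gmap Lm L0 Lp (block_mx 0 Y 0 Z) = block_mx 0 Y 0 Z].
Proof.
move=> Lm_ge0 L0_ge0 Lp_ge0 Gstar_fixed.
have Gstar_super : mx_le (Gmap Lm L0 Lp Gstar) Gstar by rewrite Gstar_fixed.
have G_ge0 := nonneg_Gmatrix Lm_ge0 L0_ge0 Lp_ge0 nonneg_Gstar Gstar_super.
have G_le := Gmatrix_min Lm_ge0 L0_ge0 Lp_ge0 nonneg_Gstar Gstar_super
  nonneg_Gstar Gstar_super.
have G_block := le_left0_block_mx G_ge0 G_le.
exists (ursubmx (Gmatrix Lm L0 Lp)), (drsubmx (Gmatrix Lm L0 Lp)); split => //.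
- exact: nonneg_ursubmx.
- by have := mx_le_ursubmx G_le; rewrite block_mxKur.
- by rewrite -G_block (Gmap_Gmatrix Lm_ge0 L0_ge0 Lp_ge0 nonneg_Gstar Gstar_super).
Qed.

Lemma Gstar_of_riccati Y Z : nonneg_mx Y -> mx_le Y Psi ->
  Z = drsubmx P + dlsubmx P *m Y -> ursubmx P + ulsubmx P *m Y + Y *m Z = Y + Y ->
  block_mx 0 Y 0 Z = Gstar.
Proof.
move=> Y_ge0 Y_le Z_eq Y_eq.
have Y_riccati : riccati T Y by apply/riccati_Pmu; rewrite -Z_eq.
have Psi_le : mx_le Psi Y by case: Psi_min => _ _ /(_ Y Y_ge0 Y_riccati).
by rewrite /Gstar Z_eq (mx_le_anti Y_le Psi_le) Vmu_Pmu.
Qed.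

Lemma Gmatrix_Theta : Gmatrix (Theta_m1 T mu) (Theta_0 T mu) (Theta_1 R p m) = Gstar.
Proof.
have [Lm_ge0 L0_ge0 Lp_ge0] := nonneg_Theta.
have [Y [Z [-> Y_ge0 Y_le]]] := Gmatrix_fixed_block Lm_ge0 L0_ge0 Lp_ge0 Gmap_Theta_Gstar.
rewrite Gmap_Theta_block => /eq_block_mx [_ /half_scale_eq Y_eq _ Z_eq].
exact: Gstar_of_riccati.
Qed.

Lemma Gmatrix_Bp : Gmatrix (Bp_m1 T mu) (Bp_0 T mu) (Bp_1 R p m) = Gstar.
Proof.
have [Lm_ge0 L0_ge0 Lp_ge0] := nonneg_Bp.
have [Y [Z [-> Y_ge0 Y_le]]] := Gmatrix_fixed_block Lm_ge0 L0_ge0 Lp_ge0 Gmap_Bp_Gstar.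
rewrite Gmap_Bp_block => /eq_block_mx [_ /half_scale_eq Y_eq _ /half_scale_eq Z_eq].
by apply: Gstar_of_riccati => //; apply: (addIr Z); rewrite -Z_eq.
Qed.

(* For the QBD (iii) the fixed-point equation does not give the Riccati
   equation for [Y]; instead [block_mx 0 Y 0 V] is a supersolution for the
   QBD (ii), whose G-matrix is already known to be [Gstar]. *)
Lemma Psi_le_of_K Y : nonneg_mx Y -> mx_le Y Psi ->
  K *m Y = ursubmx P + Y *m V -> mx_le Psi Y.
Proof.
move=> Y_ge0 Y_le KY.
have [Lm_ge0 L0_ge0 Lp_ge0] := nonneg_Bp.
pose X : 'M[R]_(p + m) := block_mx 0 Y 0 V.
have X_ge0 : nonneg_mx X.
  apply: nonneg_block_mx => //; [exact: nonneg_mx0 | exact: nonneg_mx0 | exact: nonneg_Vmu].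
have X_super : mx_le (Gmap (Bp_m1 T mu) (Bp_0 T mu) (Bp_1 R p m) X) X.
  rewrite /X Gmap_Bp_block; apply: mx_le_block; try exact: mx_le_refl.
    have -> // : 2^-1 *: (ursubmx P + ulsubmx P *m Y + Y *m V) = Y.
    by apply/half_scale_eq; rewrite addrAC -KY ulsubmx_Pmu; mx_ring.
  move=> i j; have := mx_leMl (nonneg_dlsubmx nonneg_Pmu) Y_le i j.
  by rewrite Vmu_Pmu !mxE; lra.
have Gstar_super : mx_le (Gmap (Bp_m1 T mu) (Bp_0 T mu) (Bp_1 R p m) Gstar) Gstar.
  by rewrite Gmap_Bp_Gstar.
have := Gmatrix_min Lm_ge0 L0_ge0 Lp_ge0 nonneg_Gstar Gstar_super X_ge0 X_super.
by rewrite Gmatrix_Bp => /mx_le_ursubmx; rewrite !block_mxKur.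
Qed.

Lemma Gmatrix_B : Gmatrix (B_m1 T Psi mu) (B_0 R p m) (B_1 T mu) = Gstar.
Proof.
have [Lm_ge0 L0_ge0 Lp_ge0] := nonneg_B.
have [Y [Z [-> Y_ge0 Y_le]]] := Gmatrix_fixed_block Lm_ge0 L0_ge0 Lp_ge0 Gmap_B_Gstar.
rewrite Gmap_B_block => /eq_block_mx [_ Y_eq _ Z_eq]; subst Z.
have KY : K *m Y = ursubmx P + Y *m V.
  by rewrite -{1}Y_eq mulmxA mulmxV ?mul1mx ?K_unit.
by rewrite /Gstar (mx_le_anti Y_le (Psi_le_of_K Y_ge0 Y_le KY)).
Qed.

End Theorem4.

Theorem theorem4 (R : realType) (p m : nat) (T : 'M[R]_(p + m))
    (Psi : 'M[R]_(p, m)) (mu : R) :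
  (0 < p)%N -> (0 < m)%N ->
  is_generator T ->
  is_min_nonneg_sol T Psi ->
  0 < mu -> (forall i, `|T i i| <= mu) ->
  Gmatrix (Bp_m1 T mu) (Bp_0 T mu) (Bp_1 R p m)
    = Gmatrix (Theta_m1 T mu) (Theta_0 T mu) (Theta_1 R p m)
  /\
  Gmatrix (Bp_m1 T mu) (Bp_0 T mu) (Bp_1 R p m)
    = Gmatrix (B_m1 T Psi mu) (B_0 R p m) (B_1 T mu).
Proof.
move=> _ _ T_gen Psi_min mu_gt0 T_diag_le.
have G_Bp := Gmatrix_Bp T_gen Psi_min mu_gt0 T_diag_le.
have G_Theta := Gmatrix_Theta T_gen Psi_min mu_gt0 T_diag_le.
have G_B := Gmatrix_B T_gen Psi_min mu_gt0 T_diag_le.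
by rewrite G_Bp G_Theta G_B.
Qed.
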